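(* Let $D$ be a normal binary delta-matroid whose intersection graph $G_D$ is the complete simple graph $K_v$ on $v\ge1$ vertices (no loops). Then ${}^{\partial}w_{D}(z)=2^{v}z^{v-1}$ if $v$ is odd, and ${}^{\partial}w_{D}(z)=2^{v-1}z^{v}+2^{v-1}z^{v-2}$ if $v$ is even.
   Context: A delta-matroid is a set system $(E,\mathcal{F})$, $\mathcal{F}\ne\emptyset$ a family of subsets of finite $E$, satisfying: for all $X,Y\in\mathcal{F}$ and $u\in X\Delta Y$ there is $v\in X\Delta Y$ with $X\Delta\{u,v\}\in\mathcal{F}$. Twist: $D*A=(E,\{A\Delta X:X\in\mathcal{F}\})$. Width $w(D)$ = maximum minus minimum cardinality of feasible sets; twist polynomial ${}^{\partial}w_{D}(z)=\sum_{A\subseteq E}z^{w(D*A)}$. $D$ is normal if $\emptyset\in\mathcal{F}$. For a symmetric matrix $C$ over $GF(2)$ indexed by $E$, $D(C)=(E,\{A\subseteq E: C[A]\text{ nonsingular}\})$ ($C[A]$ principal submatrix, $C[\emptyset]$ nonsingular by convention). $D$ is binary if some twist of it is isomorphic to some $D(C)$. A normal binary $D$ equals $D(C)$ for a unique symmetric $C$; its intersection graph $G_D$ has vertex set $E$, distinct $u,v$ adjacent iff $C_{u,v}=1$, and a loop at $v$ iff $C_{v,v}=1$. *)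

From HB Require Import structures.
From mathcomp Require Import all_boot all_order all_algebra.
Set Implicit Arguments. Unset Strict Implicit. Unset Printing Implicit Defensive.
Import GRing.Theory.
Local Open Scope ring_scope.

Definition is_delta_matroid (E : finType) (F : {set {set E}}) : Prop :=
  F != set0 /\
  forall X Y, X \in F -> Y \in F -> forall u, u \in (X :\: Y) :|: (Y :\: X) ->
    exists2 v, v \in (X :\: Y) :|: (Y :\: X) &
      (X :\: [set u; v]) :|: ([set u; v] :\: X) \in F.

Definition symdiff (E : finType) (A X : {set E}) : {set E} :=
  (A :\: X) :|: (X :\: A).

Definition twist (E : finType) (F : {set {set E}}) (A : {set E}) : {set {set E}} :=
  [set symdiff A X | X in F].

Definition width (E : finType) (F : {set {set E}}) : nat :=
  ((\max_(X in F) #|X|) - \big[minn/#|E|]_(X in F) #|X|)%N.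

Definition twist_poly (E : finType) (F : {set {set E}}) : {poly int} :=
  \sum_(A : {set E}) 'X^(width (twist F A)).

Definition is_normal (E : finType) (F : {set {set E}}) : Prop := set0 \in F.

Definition symmetric_mx (E : finType) (C : E -> E -> 'F_2) : Prop :=
  forall u v, C u v = C v u.

Definition principal_submx (E : finType) (C : E -> E -> 'F_2) (A : {set E})
  : 'M['F_2]_#|A| :=
  \matrix_(i, j) C (enum_val i) (enum_val j).

(* D(C): feasible sets are the A with C[A] nonsingular (det of the empty
   matrix is 1, so the empty set is feasible) *)
Definition DC (E : finType) (C : E -> E -> 'F_2) : {set {set E}} :=
  [set A : {set E} | \det (principal_submx C A) != 0].

(* binary: some twist is isomorphic to some D(C), C symmetric over GF(2).
   The isomorphism is a bijection of ground sets; the matrix is transported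
   to the ground set E. *)
Definition is_binary (E : finType) (F : {set {set E}}) : Prop :=
  exists (A : {set E}) (C : E -> E -> 'F_2) (f : E -> E),
    symmetric_mx C /\ bijective f /\ twist F A = [set (f @: X) | X : {set E} in DC C].

(* For a normal binary D, C is the (unique) symmetric matrix with D = D(C);
   its intersection graph has u~v (u<>v) iff C u v = 1, loop at v iff C v v = 1.
   G_D = K_v (simple, no loops) means that this matrix has 0 on the diagonal
   and 1 off the diagonal. *)
Definition complete_adj_mx (E : finType) : E -> E -> 'F_2 :=
  fun u v => if u == v then 0 else 1.

Definition intersection_graph_is_complete (E : finType) (F : {set {set E}}) : Prop :=
  exists C : E -> E -> 'F_2,
    symmetric_mx C /\ F = DC C /\ (forall u v, C u v = complete_adj_mx u v).

From mathcomp Require Import all_boot all_order all_algebra.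
Import GRing.Theory.
Local Open Scope ring_scope.

(* The delta-matroid D is D(C) for the matrix C = J - I of the
   complete graph.  Over GF(2) the k x k matrix J - I is nonsingular exactly
   when k is even: for k odd its column sums vanish, for k even it is its own
   inverse.  Hence the feasible sets of D are the sets of even size.  Twisting
   by A turns them into the sets whose size has the parity of |A|, and the
   width of such a parity class on v >= 1 elements is computed from its
   largest and smallest members.  Finally, exactly half of the 2^v subsets of
   E are odd, so summing z^width over all twists gives the claimed formula. *)

Lemma natr_F2 (m : nat) : (m%:R : 'F_2) = (odd m)%:R.
Proof.
elim: m => [|m IHm] //; rewrite -[m.+1]/(1 + m)%N natrD IHm /=.
by case: (odd m); [apply: val_inj | rewrite addr0].
Qed.

Lemma sum_indicator_F2 (I : finType) (A : {pred I}) :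
  \sum_(i : I) ((i \in A)%:R : 'F_2) = (odd #|A|)%:R.
Proof.
rewrite -natr_sum -natr_F2 -sum1_card [in RHS]big_mkcond /=.
by congr (_%:R); apply: eq_bigr => i _; case: (i \in A).
Qed.

Definition complete_mx (k : nat) : 'M['F_2]_k :=
  \matrix_(i, j) (if i == j then 0 else 1).

(* For odd k every column of J - I has an even number k - 1 of ones, so the
   all-ones row vector lies in its left kernel. *)
Lemma complete_mx_singular (k : nat) : odd k -> \det (complete_mx k) = 0.
Proof.
move=> k_odd; apply/eqP/det0P; exists (const_mx 1).
  case: k k_odd => [//|k] _.
  by apply/eqP => /matrixP /(_ ord0 ord0) /eqP; rewrite !mxE oner_eq0.
apply/matrixP => i j; rewrite !mxE.
transitivity (\sum_l ((l \in [set~ j])%:R : 'F_2)).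
  by apply: eq_bigr => l _; rewrite !mxE mul1r in_setC1; case: (l == j).
rewrite sum_indicator_F2 cardsC1 card_ord.
by case: k {i j} k_odd => //= k /negbTE ->.
Qed.

(* For even k, (J - I)^2 = I: the (r, c) entry is the parity of the number
   of l distinct from both r and c, which is k - 1 (odd) if r = c and
   k - 2 (even) otherwise. *)
Lemma complete_mx_involutive (k : nat) :
  ~~ odd k -> complete_mx k *m complete_mx k = 1%:M.
Proof.
move=> k_even; apply/matrixP => r c; rewrite !mxE.
transitivity (\sum_l ((l \in [set~ r] :\ c)%:R : 'F_2)).
  apply: eq_bigr => l _; rewrite !mxE !inE [l == r]eq_sym.
  by case: (r == l); case: (l == c); rewrite ?mulr0 ?mul0r ?mulr1.
rewrite sum_indicator_F2.
have odd_pred : odd k.-1 by case: k r {c} k_even => [[]|k] //= _ /negbNE.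
move/(congr1 odd): (cardsD1 c [set~ r]).
rewrite cardsC1 card_ord odd_pred in_setC1 oddD.
by rewrite [r == c]eq_sym; case: (c == r) => /= [<- | /esym/negbTE ->].
Qed.

Lemma det_complete_mx (k : nat) : (\det (complete_mx k) != 0) = ~~ odd k.
Proof.
case k_odd: (odd k); first by rewrite complete_mx_singular ?eqxx.
have := congr1 determinant (complete_mx_involutive k (negbT k_odd)).
rewrite det_mulmx det1 => det_sq; apply/eqP => det0.
by move: det_sq; rewrite det0 mul0r => /eqP; rewrite eq_sym oner_eq0.
Qed.

Definition parity_class (E : finType) (p : bool) : {set {set E}} :=
  [set Y : {set E} | odd #|Y| == p].

(* D(J - I) is the delta-matroid of the even subsets of E: every principal
   submatrix of J - I is again of the form J - I. *)
Lemma DC_complete {E : finType} {C : E -> E -> 'F_2} :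
  (forall u v, C u v = complete_adj_mx u v) -> DC C = parity_class E false.
Proof.
move=> C_complete; apply/setP => A; rewrite !inE eqbF_neg -det_complete_mx.
suff -> : principal_submx C A = complete_mx #|A| by [].
apply/matrixP => i j.
by rewrite !mxE C_complete /complete_adj_mx (inj_eq enum_val_inj).
Qed.

(* |A + X| has the parity of |A| + |X|, since |A + X| = |A| + |X| - 2|A & X|. *)
Lemma odd_symdiff {E : finType} (A X : {set E}) :
  odd #|symdiff A X| = odd #|A| (+) odd #|X|.
Proof.
rewrite /symdiff cardsU.
have -> : (A :\: X) :&: (X :\: A) = set0.
  by apply/setP => x; rewrite !inE; case: (x \in A); case: (x \in X).
rewrite cards0 subn0 -(cardsID X A) -(cardsID A X) setIC !oddD.
by case: (odd _); case: (odd _); case: (odd _).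
Qed.

Lemma symdiffK {E : finType} (A Y : {set E}) : symdiff A (symdiff A Y) = Y.
Proof.
by apply/setP => x; rewrite /symdiff !inE; case: (x \in A); case: (x \in Y).
Qed.

Lemma twist_parity_class (E : finType) (p : bool) (A : {set E}) :
  twist (parity_class E p) A = parity_class E (odd #|A| (+) p).
Proof.
apply/setP => Y; rewrite inE; apply/imsetP/idP.
  by move=> [X]; rewrite inE => /eqP odd_X ->; rewrite odd_symdiff odd_X.
move=> /eqP odd_Y; exists (symdiff A Y); last by rewrite symdiffK.
by rewrite inE odd_symdiff odd_Y addKb.
Qed.

Lemma width_extremes (E : finType) (F : {set {set E}}) (X Y : {set E}) :
  X \in F -> Y \in F -> (forall Z, Z \in F -> #|X| <= #|Z| <= #|Y|)%N ->
  width F = (#|Y| - #|X|)%N.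
Proof.
move=> FX FY bounds; rewrite /width; congr (_ - _)%N.
  apply/eqP; rewrite eqn_leq andbC.
  rewrite (leq_bigmax_cond (F := fun Z : {set E} => #|Z|) Y FY).
  by apply/bigmax_leqP => Z /bounds /andP[].
apply/eqP; rewrite eqn_leq; apply/andP; split.
  have := Order.TotalTheory.bigmin_le_cond #|E| (fun Z : {set E} => #|Z|) FX.
  by rewrite minEnat; apply.
apply: (big_ind (fun m => #|X| <= m)%N) => [|m n le_Xm le_Xn|Z /bounds /andP[le_XZ _]].
- exact: max_card.
- by rewrite leq_min le_Xm.
- exact: le_XZ.
Qed.

Lemma exists_set_of_card (E : finType) (n : nat) :
  (n <= #|E|)%N -> exists Y : {set E}, #|Y| = n.
Proof.
move=> le_nE; exists [set x in take n (enum E)].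
rewrite cardsE; move/card_uniqP: (take_uniq n (enum_uniq E)) => ->.
rewrite size_take -cardE; case: (ltnP n #|E|) => // le_En.
by apply/eqP; rewrite eqn_leq le_nE le_En.
Qed.

(* In a parity class the smallest size is p (0 or 1) and the largest is n
   or n - 1 according to whether n has parity p. *)
Lemma width_parity_class (E : finType) (p : bool) : (1 <= #|E|)%N ->
  width (parity_class E p) =
    if odd #|E| then #|E|.-1 else if p then #|E|.-2 else #|E|.
Proof.
move=> E_gt0.
have [X card_X] := exists_set_of_card E p (leq_trans (leq_b1 p) E_gt0).
have [Y card_Y] := exists_set_of_card E _ (leq_subr (odd #|E| != p) #|E|).
transitivity (#|Y| - #|X|)%N.
  apply: width_extremes.
  - by rewrite inE card_X; case: p {card_X card_Y}.
  - by rewrite inE card_Y oddB ?leq_b1 //; case: (odd #|E|); case: p {card_X card_Y}.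
  move=> Z; rewrite inE => /eqP odd_Z; rewrite card_X card_Y; apply/andP; split.
    by case: p {card_X card_Y} odd_Z; case: #|Z|.
  case: (eqVneq (odd #|E|) p) => [_|odd_E]; first by rewrite subn0 max_card.
  rewrite subn1 -ltnS (ltn_predK E_gt0) ltn_neqAle max_card andbT.
  by apply: contraNneq odd_E => <-; rewrite odd_Z.
rewrite card_X card_Y.
by case: (odd #|E|); case: p {X Y card_X card_Y}; rewrite /= ?subn0 ?subn1.
Qed.

Lemma card_subsets (E : finType) : #|{set E}| = (2 ^ #|E|)%N.
Proof. by rewrite -[#|E|]cardsT -card_powerset powersetT cardsT. Qed.

(* Toggling a fixed element is a parity-reversing involution on subsets, so
   a nonempty E has exactly 2^(|E|-1) odd subsets and as many even ones. *)
Lemma card_parity_class (E : finType) (p : bool) : (1 <= #|E|)%N ->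
  #|parity_class E p| = (2 ^ #|E|.-1)%N.
Proof.
move=> E_gt0; have /card_gt0P[x0 _] := E_gt0.
have toggle_inj : injective (symdiff [set x0]).
  by move=> A B eqAB; rewrite -(symdiffK [set x0] A) eqAB symdiffK.
have swap q : #|parity_class E q| = #|parity_class E (~~ q)|.
  rewrite -(card_imset _ toggle_inj); congr #|_|.
  by rewrite -[imset _ _]/(twist _ _) twist_parity_class cards1.
have compl : ~: parity_class E p = parity_class E (~~ p).
  by apply/setP => Y; rewrite !inE; case: (odd _); case: p.
have := cardsC (parity_class E p); rewrite compl -swap addnn card_subsets.
by rewrite -(prednK E_gt0) expnS mul2n => /double_inj.
Qed.

(* The twist polynomial of a normal binary delta-matroid whose intersection
   graph is K_v.  Only the description F = D(J - I) is needed; the other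
   hypotheses are consequences of it. *)
Theorem mainTheorem5 (E : finType) (v : nat) (F : {set {set E}}) :
  #|E| = v -> (1 <= v)%N ->
  is_delta_matroid F -> is_normal F -> is_binary F ->
  intersection_graph_is_complete F ->
  twist_poly F =
    (if odd v then (2 ^ v)%:Z *: 'X^(v.-1)
     else (2 ^ v.-1)%:Z *: 'X^v + (2 ^ v.-1)%:Z *: 'X^(v.-2)).
Proof.
move=> card_E v_gt0 _ _ _ [C [_ [F_DC C_complete]]].
have F_even : F = parity_class E false by rewrite F_DC (DC_complete C_complete).
have E_gt0 : (1 <= #|E|)%N by rewrite card_E.
have width_twist A :
    width (twist F A) = if odd v then v.-1 else if odd #|A| then v.-2 else v.
  by rewrite F_even twist_parity_class addbF width_parity_class card_E.
rewrite /twist_poly (eq_bigr _ (fun A _ => congr1 _ (width_twist A))).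
case: ifP => v_odd.
  by rewrite sumr_const card_subsets card_E -scaler_nat natz.
have card_even : #|(fun A : {set E} => ~~ odd #|A|)| = (2 ^ v.-1)%N.
  rewrite -card_E -(card_parity_class E false E_gt0).
  by apply: eq_card => A; rewrite inE unfold_in /= eqbF_neg.
have card_odd : #|(fun A : {set E} => odd #|A|)| = (2 ^ v.-1)%N.
  rewrite -card_E -(card_parity_class E true E_gt0).
  by apply: eq_card => A; rewrite inE unfold_in /= eqb_id.
rewrite (bigID (fun A : {set E} => odd #|A|)) /= addrC.
rewrite (eq_bigr (fun=> 'X^v)) => [|A /negbTE -> //].
rewrite [X in _ + X](eq_bigr (fun=> 'X^(v.-2))) => [|A -> //].
by rewrite !sumr_const card_even card_odd -!scaler_nat !natz.
Qed.
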